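(* Let $0<\alpha<1$ and let $p:\mathbb{R}\to\mathbb{R}$ be Lipschitz-continuous and $2\pi$-periodic with $p_2\le p(t)\le p_1<0$ for all $t$. Then $\lim_{v_0\to+\infty}\big(S_1(t_0,v_0)-t_0\big)=+\infty$ uniformly in $t_0\in[0,2\pi]$.
   Context: Let $\eta=((\alpha-1)p_1)^{-1/\alpha}$ and $\gamma=\sqrt{2(p_1-p_2)\eta}$. For $t_0\in\mathbb{R}$ and $v_0>\gamma$ there is a unique maximal solution $u$ of $\ddot u-\frac{1}{u^\alpha}=p(t)$, $u>0$, on an interval $(t_0,t_1)$ with $t_1<+\infty$, such that $u(t)\to0$ as $t\to t_0^+$ and as $t\to t_1^-$, $\dot u(t_0^+)=v_0$, and $\dot u(t_1^-)$ exists and is negative. The successor map is $S(t_0,v_0)=(S_1(t_0,v_0),S_2(t_0,v_0))=(t_1,-\dot u(t_1^-))$. *)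

From Stdlib Require Import Reals.
From Coquelicot Require Import Coquelicot.
Open Scope R_scope.

Definition eta_c (alpha p1 : R) : R := Rpower ((alpha - 1) * p1) (- / alpha).
Definition gamma_c (alpha p1 p2 : R) : R := sqrt (2 * (p1 - p2) * eta_c alpha p1).

Definition bounce_solution (alpha : R) (p : R -> R) (t0 v0 t1 : R) (u : R -> R) : Prop :=
  t0 < t1 /\
  (forall t, t0 < t < t1 -> 0 < u t) /\
  exists u' : R -> R,
    (forall t, t0 < t < t1 ->
       is_derive u t (u' t) /\
       is_derive u' t (/ Rpower (u t) alpha + p t)) /\
    filterlim u (at_right t0) (locally 0) /\
    filterlim u' (at_right t0) (locally v0) /\
    filterlim u (at_left t1) (locally 0) /\
    (exists w, w < 0 /\ filterlim u' (at_left t1) (locally w)).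

Definition S1_is (alpha : R) (p : R -> R) (t0 v0 t1 : R) : Prop :=
  exists u : R -> R, bounce_solution alpha p t0 v0 t1 u.

From Stdlib Require Import Reals Lra.
From Coquelicot Require Import Coquelicot.
Open Scope R_scope.

(* Since [/ u ^ alpha > 0], along a bounce [u'' >= p2], so the velocity
   drops from [v0] at a rate of at most [- p2]; as it ends negative, the
   bounce lasts longer than [v0 / - p2]. *)

Lemma limits_increment_ge (f f' : R -> R) (a b m la lb : R) :
  a < b ->
  (forall t, a < t < b -> is_derive f t (f' t)) ->
  (forall t, a < t < b -> m <= f' t) ->
  filterlim f (at_right a) (locally la) ->
  filterlim f (at_left b) (locally lb) ->
  m * (b - a) <= lb - la.
Proof.
  intros Hab Hf Hm Hla Hlb.
  assert (f_cont : forall c, a < c < b -> filterlim f (locally c) (locally (f c))).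
  { intros c Hc. apply (@ex_derive_continuous R_AbsRing R_NormedModule).
    exists (f' c). now apply Hf. }
  destruct (C0_extension_lt f la lb a b Hab f_cont Hla Hlb)
    as [g [g_cont [g_f [g_a g_b]]]].
  (* [Rmax m (f' x)] agrees with [f' x] inside [(a, b)] and is [>= m] also
     at the endpoints, where [MVT_gen] may place its point. *)
  destruct (MVT_gen g a b (fun x => Rmax m (f' x))) as [c [_ Hc]].
  - rewrite Rmin_left, Rmax_right by lra. intros x Hx.
    rewrite Rmax_right by now apply Hm.
    apply (is_derive_ext_loc f); [| now apply Hf].
    apply (locally_interval _ x a b); [apply Hx | apply Hx |].
    intros y Ha Hb. symmetry. now apply g_f.
  - intros x _. apply continuity_pt_filterlim. apply g_cont.
  - rewrite <- g_a, <- g_b, Hc.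
    apply Rmult_le_compat_r; [lra | apply Rmax_l].
Qed.

Lemma bounce_speed_lt_duration (alpha p2 : R) (p : R -> R) (t0 v0 t1 : R) (u : R -> R) :
  (forall t, p2 <= p t) ->
  bounce_solution alpha p t0 v0 t1 u ->
  v0 < - p2 * (t1 - t0).
Proof.
  intros Hp [Ht01 [_ [u' [Hu [_ [Hv0 [_ [w [Hw Hw_lim]]]]]]]]].
  assert (accel_ge : forall t, t0 < t < t1 -> p2 <= / Rpower (u t) alpha + p t).
  { intros t _.
    assert (0 < / Rpower (u t) alpha) by (apply Rinv_0_lt_compat, exp_pos).
    specialize (Hp t). lra. }
  pose proof (limits_increment_ge u' _ t0 t1 p2 v0 w Ht01
    (fun t Ht => proj2 (Hu t Ht)) accel_ge Hv0 Hw_lim).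
  lra.
Qed.

Theorem lemma4p5 (alpha p1 p2 : R) (p : R -> R) :
  0 < alpha < 1 ->
  (exists L : R, forall s t : R, Rabs (p s - p t) <= L * Rabs (s - t)) ->
  (forall t : R, p (t + 2 * PI) = p t) ->
  (forall t : R, p2 <= p t <= p1) ->
  p1 < 0 ->
  forall M : R, exists V : R,
    forall t0 v0 t1 : R,
      0 <= t0 <= 2 * PI ->
      gamma_c alpha p1 p2 < v0 ->
      V < v0 ->
      S1_is alpha p t0 v0 t1 ->
      M < t1 - t0.
Proof.
  intros _ _ _ Hp Hp1 M.
  assert (Hp2 : p2 < 0) by (specialize (Hp 0); lra).
  exists (- p2 * Rabs M).
  intros t0 v0 t1 _ _ HV [u Hu].
  pose proof (bounce_speed_lt_duration alpha p2 p t0 v0 t1 u (fun t => proj1 (Hp t)) Hu).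
  pose proof (Rle_abs M).
  nra.
Qed.
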